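(* Let $n\ge2$, and let $\rho_1,\ldots,\rho_n>0$ and $\theta>0$ be (sufficiently smooth) functions on a domain in $\mathbb{R}^3$, with $\rho=\sum_{i=1}^n\rho_i$ and $\mu_i=\theta(\log(\rho_i/\theta)+1)$. Let $b_{ij}=b_{ji}>0$ ($i\ne j$) be friction coefficients, and let $B=(B_{ij})$ be given by $B_{ii}=\sum_{j\ne i}b_{ij}\rho_j$ and $B_{ij}=-b_{ij}\rho_i$ for $j\ne i$; let $B^\#$ be the group inverse of $B$, i.e. the matrix satisfying $BB^\#=B^\#B=I-(\boldsymbol\rho/\rho)\otimes\boldsymbol1$, $\sum_jB^\#_{ij}\rho_j=0$ and $\sum_jB^\#_{ji}=0$ for all $i$. Let $P=(P_{ij})$ with $P_{ij}=\delta_{ij}-\rho_j/\rho$. Let $\bar q_1,\ldots,\bar q_n\in\mathbb{R}$ satisfy $\sum_{i=1}^n\bar q_i\rho_i=0$, and define the driving forces $$d_i=\rho_i\nabla\frac{\mu_i}{\theta}-\frac{\rho_i}{\rho\theta}\nabla(\rho\theta)-2\rho_i\theta\nabla\frac1\theta+\bar q_i\rho_i\nabla\log\theta,\quad i=1,\ldots,n.$$ Suppose that the fluxes $J_1,\ldots,J_n$ satisfy $\sum_{i=1}^nJ_i=0$ and the Maxwell–Stefan relations $d_i=-\sum_{j=1}^nb_{ij}\rho_i\rho_j\big(\frac{J_i}{\rho_i}-\frac{J_j}{\rho_j}\big)$, $i=1,\ldots,n$. Then $$J_i=-\sum_{j=1}^nM_{ij}\nabla\frac{\mu_j}{\theta}-M_i\nabla\frac1\theta,\qquad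 M_{ij}=\sum_{k=1}^nB^\#_{ik}\rho_kP_{kj},\quad M_i=-\theta\sum_{k=1}^nB^\#_{ik}\rho_k\bar q_k,$$ where the matrix $(M_{ij})$ is symmetric and $\sum_{i=1}^nM_{ij}=0$ for all $j$ and $\sum_{i=1}^nM_i=0$.
   Context: For vectors $a,b\in\mathbb{R}^n$, $(a\otimes b)_{ij}=a_ib_j$; $\boldsymbol1=(1,\ldots,1)$, $\boldsymbol\rho=(\rho_1,\ldots,\rho_n)$. Note $\nabla(\mu_j/\theta)=\nabla q_j$ with $q_j=\log(\rho_j/\theta)$ the thermo-chemical potentials, so the conclusion is the Fick–Onsager form of the fluxes. (The paper denotes the real numbers $\bar q_i$ by $q_i$; they are renamed here to avoid a clash with the thermo-chemical potentials.) *)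

From HB Require Import structures.
From mathcomp Require Import all_boot all_order all_algebra.
From mathcomp Require Import all_classical all_reals all_analysis.
Set Implicit Arguments. Unset Strict Implicit. Unset Printing Implicit Defensive.
Import Order.TTheory GRing.Theory Num.Theory.
Import numFieldNormedType.Exports.
Local Open Scope ring_scope.

Section Defs.
Variable R : realType.
Notation V := 'rV[R]_3.

Definition grad (f : V -> R) (x : V) : V :=
  \row_(k < 3) derive f x (delta_mx 0 k).

Variable n : nat.

Definition rho_tot (rho : 'I_n -> V -> R) (x : V) : R := \sum_(i < n) rho i x.

Definition chem_pot (rho : 'I_n -> V -> R) (theta : V -> R) (i : 'I_n) (x : V) : R :=
  theta x * (ln (rho i x / theta x) + 1).

Definition fricB (b : 'I_n -> 'I_n -> R) (rho : 'I_n -> V -> R) (x : V) : 'M[R]_n :=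
  \matrix_(i, j) (if i == j then \sum_(k < n | k != i) b i k * rho k x
                  else - (b i j * rho i x)).

Definition projP (rho : 'I_n -> V -> R) (x : V) : 'M[R]_n :=
  \matrix_(i, j) ((i == j)%:R - rho j x / rho_tot rho x).

Definition rho_otimes_one (rho : 'I_n -> V -> R) (x : V) : 'M[R]_n :=
  \matrix_(i, j) (rho i x / rho_tot rho x).

Definition drive_force (rho : 'I_n -> V -> R) (theta : V -> R) (q : 'I_n -> R)
    (i : 'I_n) (x : V) : V :=
  rho i x *: grad (fun y => chem_pot rho theta i y / theta y) x
  - (rho i x / (rho_tot rho x * theta x)) *: grad (fun y => rho_tot rho y * theta y) x
  - (2 * rho i x * theta x) *: grad (fun y => 1 / theta y) x
  + (q i * rho i x) *: grad (fun y => ln (theta y)) x.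

Definition Mmat (Bs : V -> 'M[R]_n) (rho : 'I_n -> V -> R) (x : V) : 'M[R]_n :=
  \matrix_(i, j) \sum_(k < n) Bs x i k * rho k x * projP rho x k j.

Definition Mvec (Bs : V -> 'M[R]_n) (rho : 'I_n -> V -> R) (theta : V -> R)
    (q : 'I_n -> R) (i : 'I_n) (x : V) : R :=
  - (theta x * \sum_(k < n) Bs x i k * rho k x * q k).

End Defs.

From HB Require Import structures.
From mathcomp Require Import all_boot all_order all_algebra.
From mathcomp Require Import all_classical all_reals all_analysis.
From mathcomp Require Import ring.

Set Implicit Arguments.
Unset Strict Implicit.
Unset Printing Implicit Defensive.

Import Order.TTheory GRing.Theory Num.Theory.
Import numFieldNormedType.Exports.
Local Open Scope ring_scope.
Local Open Scope classical_set_scope.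

(* Writing d_i = rho_i grad(mu_i/theta) + rho_i w + q_i rho_i grad(log theta), the
   middle term (the same w for every species) is annihilated by the group inverse
   B# because B# rho = 0, and grad(log theta) = -theta grad(1/theta). The
   Maxwell-Stefan relations read d = -B J, and since B# B = I - (rho/rho) (x) 1
   acts as the identity on fluxes summing to zero, J = -B# d. Finally
   M = B# diag(rho) P reduces to B#_ij rho_j, which is symmetric because B diag(rho)
   is: diag(rho) B#^T diag(rho)^-1 satisfies the same identities as B#, and these
   determine it uniquely. *)

Lemma derive_ln_comp (R : realType) (V : normedModType R) (f : V -> R) x v :
  0 < f x -> differentiable f x -> 'D_v (@ln R \o f) x = 'D_v f x / f x.
Proof.
move=> fx_gt0 df.
have dln : differentiable (@ln R) (f x).
  by apply/derivable1_diffP; apply: ex_derive; exact: is_derive1_ln.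
rewrite deriveE; last exact: differentiable_comp.
rewrite diff_comp //=.
set w := 'd f x v.
have -> : w = w *: (1 : R) by rewrite /GRing.scale /= mulr1.
rewrite linearZ /= -deriveE //.
have [_ ->] := is_derive1_ln fx_gt0.
by rewrite /w -deriveE // /GRing.scale /= mulrC.
Qed.

Lemma grad_ln (R : realType) (theta : 'rV[R]_3 -> R) x :
  0 < theta x -> differentiable theta x ->
  grad (fun y => ln (theta y)) x = - theta x *: grad (fun y => 1 / theta y) x.
Proof.
move=> theta_gt0 dtheta; apply/rowP => k; rewrite !mxE.
under [fun y => 1 / _]funext => y do rewrite div1r.
rewrite derive_ln_comp // deriveV ?gt_eqF //; last exact: diff_derivable.
by rewrite /GRing.scale /=; field; rewrite gt_eqF.
Qed.

Lemma ginv_unique (R : pzRingType) n (B G Y P : 'M[R]_n) :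
  Y *m B = 1%:M - P -> Y *m P = 0 -> B *m G = 1%:M - P -> P *m G = 0 -> Y = G.
Proof.
move=> YB YP BG PG.
by rewrite -[Y]mulmx1 -[1%:M](subrK P) mulmxDr YP addr0 -BG mulmxA YB
  mulmxBl mul1mx PG subr0.
Qed.

Section GroupInverse.
Variables (R : fieldType) (n : nat) (r : 'I_n -> R).

Let Wr : 'M[R]_n := \matrix_(i, j) (r i / \sum_(k < n) r k).

Lemma ginv_solve (V : lmodType R) (B G : 'M[R]_n) (J d : 'I_n -> V) :
  G *m B = 1%:M - Wr -> \sum_(i < n) J i = 0 ->
  (forall i, d i = - \sum_(j < n) B i j *: J j) ->
  forall i, J i = - \sum_(k < n) G i k *: d k.
Proof.
move=> GB sumJ0 dE i.
under eq_bigr => k _ do rewrite dE scalerN scaler_sumr.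
rewrite sumrN opprK exchange_big /=.
under eq_bigr => j _ do (under eq_bigr => k _ do rewrite scalerA; rewrite -scaler_suml).
have GBE j : \sum_(k < n) G i k * B k j = (i == j)%:R - r i / \sum_(k < n) r k.
  by have := congr1 (fun M : 'M[R]_n => M i j) GB; rewrite !mxE.
under eq_bigr => j _ do rewrite GBE scalerBl.
rewrite sumrB -scaler_sumr sumJ0 scaler0 subr0 (bigD1 i) //= eqxx scale1r.
by rewrite big1 ?addr0 // => j /negbTE; rewrite eq_sym => ->; rewrite scale0r.
Qed.

Lemma ginv_mul_proj (G : 'M[R]_n) i j :
  \sum_(k < n) G i k * r k = 0 ->
  \sum_(k < n) G i k * r k * ((k == j)%:R - r j / \sum_(l < n) r l) = G i j * r j.
Proof.
move=> Gr0; under eq_bigr => k _ do rewrite mulrBr.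
rewrite sumrB -mulr_suml Gr0 mul0r subr0 (bigD1 j) //= eqxx mulr1.
by rewrite big1 ?addr0 // => k /negbTE ->; rewrite mulr0.
Qed.

Lemma sum_ginv_col0 (G : 'M[R]_n) (c : 'I_n -> R) :
  (forall k, \sum_(i < n) G i k = 0) -> \sum_(i < n) \sum_(k < n) G i k * c k = 0.
Proof.
by move=> Gc0; rewrite exchange_big big1 // => k _; rewrite -mulr_suml Gc0 mul0r.
Qed.

Lemma ginv_apply_forces (V : lmodType R) (G : 'M[R]_n) (q : 'I_n -> R)
    (g : 'I_n -> V) (w u : V) i :
  \sum_(k < n) G i k * r k = 0 ->
  \sum_(k < n) G i k *: (r k *: g k + r k *: w + (q k * r k) *: u) =
  \sum_(k < n) (G i k * r k) *: g k + (\sum_(k < n) G i k * r k * q k) *: u.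
Proof.
move=> Gr0; under eq_bigr => k _ do rewrite !scalerDr !scalerA.
rewrite !big_split /= -(scaler_suml w) Gr0 scale0r addr0 scaler_suml.
by congr (_ + _); apply: eq_bigr => k _; rewrite mulrA mulrAC.
Qed.

Hypothesis r_neq0 : forall i, r i != 0.

Lemma ginv_scaled_sym (B G : 'M[R]_n) :
  (forall i j, B i j * r j = B j i * r i) ->
  B *m G = 1%:M - Wr -> (forall j, \sum_(i < n) G i j = 0) ->
  forall i j, G i j * r j = G j i * r i.
Proof.
move=> Bsym BG Gc0.
(* With D = diag r, Y = D G^T D^-1 satisfies the identities characterising G. *)
pose Y := \matrix_(i, j) (r i * G j i / r j).
have YB : Y *m B = 1%:M - Wr.
  apply/matrixP => i j; rewrite !mxE.
  transitivity (r i / r j * (B *m G) j i).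
    rewrite mxE mulr_sumr; apply: eq_bigr => k _.
    by rewrite mxE -[B k j](mulfK (r_neq0 j)) Bsym; field; rewrite !r_neq0.
  rewrite BG !mxE mulrBr mulrA divfK // eq_sym; congr (_ - _).
  by case: eqP => [->|_]; rewrite ?mulr1 ?divff ?mulr0.
have YWr : Y *m Wr = 0.
  apply/matrixP => i j; rewrite !mxE.
  transitivity (r i / (\sum_(l < n) r l) * \sum_(k < n) G k i).
    rewrite mulr_sumr; apply: eq_bigr => k _.
    by rewrite !mxE mulrA divfK // mulrAC.
  by rewrite Gc0 mulr0.
have WrG : Wr *m G = 0.
  apply/matrixP => i j; rewrite !mxE.
  under eq_bigr => k _ do rewrite mxE.
  by rewrite -mulr_sumr Gc0 mulr0.
move=> i j; have := congr1 (fun M : 'M[R]_n => M j i) (ginv_unique YB YWr BG WrG).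
by rewrite mxE => <-; rewrite divfK // mulrC.
Qed.

End GroupInverse.

Section Friction.
Variables (R : realType) (n : nat) (rho : 'I_n -> 'rV[R]_3 -> R) (x : 'rV[R]_3).

Lemma fricB_scaled_sym (b : 'I_n -> 'I_n -> R) :
  (forall i j, i != j -> b i j = b j i) ->
  forall i j, fricB b rho x i j * rho j x = fricB b rho x j i * rho i x.
Proof.
move=> b_sym i j; rewrite !mxE eq_sym.
by case: eqP => [->|/eqP neq_ij] //; rewrite [b j i]b_sym // !mulNr mulrAC.
Qed.

Lemma maxwell_stefan_fricB (V : lmodType R) (b : 'I_n -> 'I_n -> R)
    (J : 'I_n -> V) i :
  (forall j, rho j x != 0) ->
  \sum_(j < n) (b i j * rho i x * rho j x) *:
     ((rho i x)^-1 *: J i - (rho j x)^-1 *: J j) =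
  \sum_(j < n) fricB b rho x i j *: J j.
Proof.
move=> rho_neq0.
under eq_bigr => j _ do
  rewrite scalerBr !scalerA mulfK // [_ * rho i x * _]mulrAC mulfK //.
rewrite sumrB -scaler_suml (bigD1 i) //= [in RHS](bigD1 i) //= mxE eqxx.
rewrite [X in _ - X](bigD1 i) //= scalerDl opprD addrACA subrr add0r.
rewrite -sumrN; congr (_ + _); apply: eq_bigr => j neq_ji.
by rewrite mxE eq_sym (negbTE neq_ji) scaleNr.
Qed.

Lemma Mmat_ginv (Bs : 'rV[R]_3 -> 'M[R]_n) i j :
  \sum_(k < n) Bs x i k * rho k x = 0 ->
  Mmat Bs rho x i j = Bs x i j * rho j x.
Proof.
move=> Grho0; rewrite mxE -(ginv_mul_proj j Grho0).
by apply: eq_bigr => k _; rewrite mxE.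
Qed.

Lemma drive_force_decomp (theta : 'rV[R]_3 -> R) (q : 'I_n -> R) :
  0 < theta x -> differentiable theta x ->
  exists w, forall i, drive_force rho theta q i x =
    rho i x *: grad (fun y => chem_pot rho theta i y / theta y) x + rho i x *: w
    + (q i * rho i x) *: (- theta x *: grad (fun y => 1 / theta y) x).
Proof.
move=> theta_gt0 dtheta.
exists (- ((rho_tot rho x * theta x)^-1 *: grad (fun y => rho_tot rho y * theta y) x)
        - (2 * theta x) *: grad (fun y => 1 / theta y) x).
move=> i; rewrite /drive_force grad_ln //; congr (_ + _).
by rewrite scalerBr scalerN !scalerA addrA mulrCA mulrA.
Qed.

End Friction.

Theorem proposition2p1 (R : realType) (n : nat) (Omega : set 'rV[R]_3)
    (rho : 'I_n -> 'rV[R]_3 -> R) (theta : 'rV[R]_3 -> R)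
    (b : 'I_n -> 'I_n -> R) (Bs : 'rV[R]_3 -> 'M[R]_n) (q : 'I_n -> R)
    (J : 'I_n -> 'rV[R]_3 -> 'rV[R]_3) :
  (2 <= n)%N ->
  open Omega ->
  (forall x, Omega x -> forall i, 0 < rho i x) ->
  (forall x, Omega x -> 0 < theta x) ->
  (forall x, Omega x -> forall i, differentiable (rho i) x) ->
  (forall x, Omega x -> differentiable theta x) ->
  (forall i j, i != j -> b i j = b j i) ->
  (forall i j, i != j -> 0 < b i j) ->
  (* Bs x is the group inverse of B at x *)
  (forall x, Omega x ->
     fricB b rho x *m Bs x = 1%:M - rho_otimes_one rho x /\
     Bs x *m fricB b rho x = 1%:M - rho_otimes_one rho x /\
     (forall i, \sum_(j < n) Bs x i j * rho j x = 0) /\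
     (forall i, \sum_(j < n) Bs x j i = 0)) ->
  (forall x, Omega x -> \sum_(i < n) q i * rho i x = 0) ->
  (forall x, Omega x -> \sum_(i < n) J i x = 0) ->
  (forall x, Omega x -> forall i,
     drive_force rho theta q i x =
     - \sum_(j < n) (b i j * rho i x * rho j x) *:
          ((rho i x)^-1 *: J i x - (rho j x)^-1 *: J j x)) ->
  forall x, Omega x ->
    (forall i, J i x =
       - \sum_(j < n) Mmat Bs rho x i j *:
            grad (fun y => chem_pot rho theta j y / theta y) x
       - Mvec Bs rho theta q i x *: grad (fun y => 1 / theta y) x) /\
    (forall i j, Mmat Bs rho x i j = Mmat Bs rho x j i) /\
    (forall j, \sum_(i < n) Mmat Bs rho x i j = 0) /\
    \sum_(i < n) Mvec Bs rho theta q i x = 0.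
Proof.
move=> _ _ rho_gt0 theta_gt0 _ dtheta b_sym _ hBs _ sumJ0 hMS x Ox.
have [BG [GB [Grho0 Gcol0]]] := hBs x Ox.
have rho_neq0 k : rho k x != 0 by rewrite gt_eqF ?rho_gt0.
have MmatE i j : Mmat Bs rho x i j = Bs x i j * rho j x by exact: Mmat_ginv.
split; [|split; [|split]].
- have [w dE] := drive_force_decomp rho q (theta_gt0 x Ox) (dtheta x Ox).
  have dfric k :
      drive_force rho theta q k x = - \sum_(j < n) fricB b rho x k j *: J j x.
    by rewrite hMS // maxwell_stefan_fricB.
  move=> i; rewrite (ginv_solve GB (sumJ0 x Ox) dfric i).
  under eq_bigr => k _ do rewrite dE.
  rewrite ginv_apply_forces // opprD /Mvec; congr (- _ - _).
    by apply: eq_bigr => j _; rewrite MmatE.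
  by rewrite scalerA mulrN mulrC scaleNr.
- move=> i j; rewrite !MmatE.
  exact: (ginv_scaled_sym (r := fun k => rho k x) rho_neq0
            (fricB_scaled_sym rho x b_sym) BG Gcol0 i j).
- by move=> j; under eq_bigr => i _ do rewrite MmatE; rewrite -mulr_suml Gcol0 mul0r.
- rewrite /Mvec sumrN -mulr_sumr.
  under eq_bigr => i _ do under eq_bigr => k _ do rewrite -mulrA.
  by rewrite sum_ginv_col0 ?mulr0 ?oppr0.
Qed.
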